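(* Let $n \in \mathbb{Z}_{\geqslant 2}$, $k \in \mathbb{Z}_{\geqslant 1}$ and let $q \geqslant 3$ be a prime number. Then $$v_q\left(\sigma_k(n)\right) = \sum_{\substack{p^{\alpha} \| n \\ p^{k} \equiv 1 \pmod q}} v_q(\alpha+1) \;+\; \sum_{\substack{p^{\alpha} \| n \\ p \ne q \\ p^k \not\equiv 1 \pmod q \\ \varpi_k \mid \alpha + 1}} \Bigl( v_q(\alpha+1) + v_q(k) + v_q\left(\Phi_{\varpi_1}(p)\right) \Bigr),$$ where both sums run over primes $p$ dividing $n$ (with $\alpha = v_p(n)$), $\varpi_1 := \operatorname{ord}_q(p)$ and $\varpi_k := \operatorname{ord}_q(p^k)$.
   Context: $\sigma_k(n) := \sum_{d \mid n} d^k$. $v_q$ denotes the $q$-adic valuation. For a prime $p$, $p^{\alpha} \| n$ means $p^\alpha \mid n$ and $p^{\alpha+1} \nmid n$, i.e. $\alpha = v_p(n)$. $\operatorname{ord}_q(a)$ is the multiplicative order of $a$ modulo $q$ (for $q \nmid a$). $\Phi_m(X)$ denotes the $m$th cyclotomic polynomial. *)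

From mathcomp Require Import all_boot all_order all_algebra all_field.
Set Implicit Arguments. Unset Strict Implicit. Unset Printing Implicit Defensive.
Import GRing.Theory Num.Theory.

Definition sigma (k n : nat) : nat := \sum_(d <- divisors n) d ^ k.

(* ord_q(a): multiplicative order of a modulo q, i.e. the least m >= 1 with
   a^m = 1 (mod q).  For q prime and q not dividing a, Fermat gives m <= q-1,
   so searching m in [1, q] finds it; (returns 0 if no such m <= q). *)
Definition ordq (q a : nat) : nat :=
  head 0%N [seq m <- iota 1 q | a ^ m == 1 %[mod q]].

Definition vPhi (q m p : nat) : nat :=
  logn q `|((Cyclotomic m).[p%:Z])%R|%N.

From mathcomp Require Import all_boot all_order all_algebra all_field.
From mathcomp Require Import zify ring.
Set Implicit Arguments. Unset Strict Implicit. Unset Printing Implicit Defensive.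
Import GRing.Theory.

(* sigma_k is multiplicative and sigma_k(p^a) = 1 + y + ... + y^a with y = p^k,
   so it suffices to compute v_q of one such geometric sum.  If y = 1 (mod q),
   lifting the exponent gives v_q(a+1).  If p = q the sum is 1 (mod q).
   Otherwise v_q(sum) = v_q(y^(a+1) - 1), which vanishes unless ord_q(y)
   divides a+1; then m := ord_q(p) divides k(a+1), and lifting the exponent
   for p^m = 1 (mod q), together with q not dividing m < q, gives
   v_q(k(a+1)) + v_q(p^m - 1).  Finally p^m - 1 is the product of the
   Phi_d(p) over d | m, and q divides none of them with d < m. *)

Definition geom_sum (y a : nat) : nat := \sum_(0 <= i < a) y ^ i.

Lemma geom_sum0 y : geom_sum y 0 = 0.
Proof. by rewrite /geom_sum big_geq. Qed.

Lemma geom_sumS y a : geom_sum y a.+1 = geom_sum y a + y ^ a.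
Proof. by rewrite /geom_sum big_nat_recr. Qed.

Lemma geom_sumD y m n : geom_sum y (m + n) = geom_sum y m + y ^ m * geom_sum y n.
Proof.
elim: n => [|n IHn]; first by rewrite addn0 geom_sum0 muln0 addn0.
by rewrite addnS !geom_sumS IHn expnD; ring.
Qed.

Lemma geom_sumM y b c : geom_sum y (b * c) = geom_sum y b * geom_sum (y ^ b) c.
Proof.
elim: c => [|c IHc]; first by rewrite muln0 !geom_sum0 muln0.
by rewrite mulnS addnC geom_sumD IHc geom_sumS -expnM; ring.
Qed.

Lemma geom_sum_gt0 y a : (0 < geom_sum y a) = (0 < a).
Proof. by case: a => [|a]; rewrite ?geom_sum0 // /geom_sum big_nat_recl // expn0. Qed.

Lemma expn_sub1E y a : y ^ a - 1 = y.-1 * geom_sum y a.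
Proof.
case: y => [|y]; first by rewrite mul0n; case: a => [|a]; rewrite ?expn0 ?exp0n.
suff -> : y.+1 ^ a = y * geom_sum y.+1 a + 1 by rewrite addnK.
elim: a => [|a IHa]; first by rewrite geom_sum0 muln0 expn0.
by rewrite geom_sumS expnS IHa; ring.
Qed.

Lemma geom_sum_mod1 q y a : y = 1 %[mod q] -> geom_sum y a = a %[mod q].
Proof.
move=> y1; elim: a => [|a IHa]; first by rewrite geom_sum0.
by rewrite geom_sumS -modnDm IHa -modnXm y1 modnXm exp1n modnDm addn1.
Qed.

Lemma gcdn_mul_coprime d m n : coprime m n -> d %| m * n ->
  gcdn d m * gcdn d n = d.
Proof.
move=> cmn d_dvd; apply/eqP; rewrite eqn_dvd; apply/andP; split.
  rewrite Gauss_dvd ?dvdn_gcdl //.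
  exact: coprime_dvdl (dvdn_gcdr _ _) (coprime_dvdr (dvdn_gcdr _ _) cmn).
have d_dvd_mn : d %| gcdn d m * n by rewrite muln_gcdl dvdn_gcd dvdn_mulr.
by rewrite muln_gcdr dvdn_gcd dvdn_mull.
Qed.

Lemma divisorsM m n : 0 < m -> 0 < n -> coprime m n ->
  perm_eq (divisors (m * n)) [seq d1 * d2 | d1 <- divisors m, d2 <- divisors n].
Proof.
move=> m_gt0 n_gt0 cmn; have mn_gt0 : 0 < m * n by rewrite muln_gt0 m_gt0.
have gcd_mul d1 d2 : d1 %| m -> d2 %| n ->
    gcdn (d1 * d2) m = d1 /\ gcdn (d1 * d2) n = d2.
  move=> d1m d2n; rewrite gcdnC Gauss_gcdl ?(coprime_dvdr d2n cmn) ?(gcdn_idPr d1m) //.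
  rewrite gcdnC Gauss_gcdr ?(gcdn_idPr d2n) //.
  by rewrite (coprime_dvdr d1m) // coprime_sym.
apply: uniq_perm; rewrite ?divisors_uniq //.
  apply: allpairs_uniq; rewrite ?divisors_uniq //.
  move=> _ _ /allpairsP[[x1 x2] [xm xn ->]] /allpairsP[[y1 y2] [ym yn ->]] /= E.
  rewrite /= -!dvdn_divisors // in xm xn ym yn.
  have [[gx1 gx2] [gy1 gy2]] := (gcd_mul _ _ xm xn, gcd_mul _ _ ym yn).
  by congr pair; [rewrite -gx1 E gy1 | rewrite -gx2 E gy2].
move=> d; rewrite -dvdn_divisors //.
apply/idP/allpairsP => [d_dvd | [[d1 d2] [/= d1m d2n ->]]].
  exists (gcdn d m, gcdn d n); rewrite -!dvdn_divisors ?dvdn_gcdr //.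
  by rewrite gcdn_mul_coprime.
by rewrite -!dvdn_divisors // in d1m d2n; exact: dvdn_mul.
Qed.

Lemma sigmaM k m n : 0 < m -> 0 < n -> coprime m n ->
  sigma k (m * n) = sigma k m * sigma k n.
Proof.
move=> m_gt0 n_gt0 cmn; rewrite /sigma (perm_big _ (divisorsM m_gt0 n_gt0 cmn)) /=.
rewrite big_allpairs_dep big_distrl /=; apply: eq_bigr => d1 _.
by rewrite big_distrr /=; apply: eq_bigr => d2 _; rewrite expnMn.
Qed.

Lemma sigma_pfactor k p e : prime p -> sigma k (p ^ e) = geom_sum (p ^ k) e.+1.
Proof.
move=> p_pr; have pe_gt0 : 0 < p ^ e by rewrite expn_gt0 prime_gt0.
have divisors_pfactor : perm_eq (divisors (p ^ e)) [seq p ^ i | i <- iota 0 e.+1].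
  apply: uniq_perm; rewrite ?divisors_uniq ?map_inj_uniq ?iota_uniq //.
    exact/expnI/prime_gt1.
  move=> d; rewrite -dvdn_divisors //; apply/(dvdn_pfactor _ _ p_pr)/mapP.
    by case=> i i_le ->; exists i; rewrite ?mem_iota.
  by case=> i; rewrite mem_iota => i_le ->; exists i.
rewrite /sigma (perm_big _ divisors_pfactor) big_map /geom_sum /index_iota subn0.
by apply: eq_bigr => i _; rewrite -!expnM mulnC.
Qed.

Lemma sigma_prod k (s : seq nat) (e : nat -> nat) : uniq s -> all prime s ->
  sigma k (\prod_(p <- s) p ^ e p) = \prod_(p <- s) geom_sum (p ^ k) (e p).+1.
Proof.
elim: s => [|p s IHs]; first by rewrite !big_nil /sigma /= big_seq1 exp1n.
case/andP=> p_notin s_uniq /andP[p_pr s_pr].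
have s_gt0 : 0 < \prod_(r <- s) r ^ e r.
  rewrite big_seq_cond prodn_cond_gt0 // => r /andP[/(allP s_pr)/prime_gt0 r_gt0 _].
  by rewrite expn_gt0 r_gt0.
have p_coprime : coprime (p ^ e p) (\prod_(r <- s) r ^ e r).
  rewrite coprimeXl // big_seq_cond; apply: (big_ind (coprime p)) => // [|x y|r].
  - exact: coprimen1.
  - by rewrite coprimeMr => ->.
  case/andP=> r_in _; have r_pr := allP s_pr r r_in.
  rewrite coprimeXr // prime_coprime // dvdn_prime2 //.
  by apply: contraNneq p_notin => ->.
have pe_gt0 : 0 < p ^ e p by rewrite expn_gt0 prime_gt0.
by rewrite !big_cons sigmaM // sigma_pfactor // IHs.
Qed.

Lemma sigmaE k n : 0 < n ->
  sigma k n = \prod_(p <- primes n) geom_sum (p ^ k) (logn p n).+1.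
Proof.
move=> n_gt0; rewrite {1}(prod_prime_decomp n_gt0) prime_decompE big_map /=.
by rewrite sigma_prod ?primes_uniq ?all_prime_primes.
Qed.

Lemma head_filter_iotaP (P : pred nat) i n : (exists2 j, i <= j < i + n & P j) ->
  let h := head 0 [seq m <- iota i n | P m] in
  [/\ i <= h < i + n, P h & forall j, i <= j < h -> ~~ P j].
Proof.
elim: n i => [|n IHn] i [j j_in Pj] /=; first by lia.
have [Pi|nPi] /= := boolP (P i); first by split=> // [|m]; lia.
have [|h_in Ph h_min] := IHn i.+1.
  by exists j => //; case: (eqVneq j i) => [j_i|]; [move: nPi; rewrite -j_i Pj | lia].
split=> // [|m m_in]; first by lia.
by case: (eqVneq m i) => [-> //|]; move=> ?; apply: h_min; lia.
Qed.

Section MultiplicativeOrder.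

Variables q a : nat.
Hypotheses (q_pr : prime q) (a_coprime : coprime a q).

Lemma ordqP :
  [/\ 0 < ordq q a < q, a ^ ordq q a = 1 %[mod q]
    & forall j, 0 < j < ordq q a -> a ^ j != 1 %[mod q]].
Proof.
have q_gt1 := prime_gt1 q_pr.
have fermat : a ^ q.-1 == 1 %[mod q].
  by rewrite -totient_prime // cyclic.Euler_exp_totient.
have [|ord_in /eqP ord1 ord_min] :=
  @head_filter_iotaP (fun m => a ^ m == 1 %[mod q]) 1 q.
  by exists q.-1; [lia | exact: fermat].
rewrite /ordq; split=> //; apply/andP; split; first by lia.
rewrite ltnNge; apply/negP => q_le_ord.
by move: (ord_min q.-1); rewrite fermat => /(_ _)/negP; apply; lia.
Qed.

Lemma ordq_dvdn j : (ordq q a %| j) = (a ^ j == 1 %[mod q]).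
Proof.
have [/andP[ord_gt0 _] ord1 ord_min] := ordqP.
have -> : a ^ j = a ^ (j %% ordq q a) %[mod q].
  rewrite {1}(divn_eq j (ordq q a)) expnD [_ %/ _ * _]mulnC expnM.
  by rewrite -modnMml -modnXm ord1 modnXm exp1n modnMml mul1n.
rewrite /dvdn; have [-> |j_gt0] := posnP (j %% ordq q a); first by rewrite expn0 !eqxx.
by rewrite (negbTE (ord_min _ _)) ?j_gt0 ?ltn_pmod.
Qed.

Lemma coprime_ordq : coprime q (ordq q a).
Proof.
have [/andP[ord_gt0 ord_lt] _ _] := ordqP.
by rewrite prime_coprime //; apply/negP => /(dvdn_leq ord_gt0); rewrite leqNgt ord_lt.
Qed.

End MultiplicativeOrder.

Lemma logn_prod q (s : seq nat) (F : nat -> nat) :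
  (forall i, i \in s -> 0 < F i) ->
  logn q (\prod_(i <- s) F i) = \sum_(i <- s) logn q (F i).
Proof.
elim: s => [|i s IHs] F_gt0; first by rewrite !big_nil logn1.
have F_gt0' j : j \in s -> 0 < F j by move=> js; rewrite F_gt0 // inE js orbT.
rewrite !big_cons lognM ?F_gt0 ?mem_head ?IHs //.
by rewrite big_seq_cond; apply: prodn_cond_gt0 => j /andP[/F_gt0'].
Qed.

Definition cyclotomic_at (d p : nat) : nat := `|((Cyclotomic d).[p%:Z])%R|%N.

Lemma expn_sub1_prod_cyclotomic p j : 0 < p -> 0 < j ->
  p ^ j - 1 = \prod_(d <- divisors j) cyclotomic_at d p.
Proof.
move=> p_gt0 j_gt0.
have -> : p ^ j - 1 = `|(p%:Z ^+ j - 1)%R|%N.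
  by rewrite -natz -natrX natz subzn ?expn_gt0 ?p_gt0.
rewrite /cyclotomic_at -(big_morph (fun x : int => `|x|%N) abszM absz1).
by rewrite -horner_prod prod_Cyclotomic // !hornerE.
Qed.

Lemma cyclotomic_at_dvdn p d j : 0 < p -> 0 < j -> d %| j ->
  cyclotomic_at d p %| p ^ j - 1.
Proof.
move=> p_gt0 j_gt0 d_dvd_j; rewrite expn_sub1_prod_cyclotomic //.
by rewrite (big_rem d) -?dvdn_divisors ?dvdn_mulr.
Qed.

Lemma cyclotomic_at_gt0 p d : 1 < p -> 0 < d -> 0 < cyclotomic_at d p.
Proof.
move=> p_gt1 d_gt0.
apply: dvdn_gt0 _ (cyclotomic_at_dvdn (ltnW p_gt1) d_gt0 (dvdnn d)).
by rewrite subn_gt0 -{1}(expn0 p) ltn_exp2l.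
Qed.

Lemma vPhi_ordq q p : prime q -> 1 < p -> coprime p q ->
  vPhi q (ordq q p) p = logn q (p ^ ordq q p - 1).
Proof.
move=> q_pr p_gt1 p_coprime; have p_gt0 := ltnW p_gt1.
rewrite [LHS]/vPhi -/(cyclotomic_at _ p).
have [/andP[m_gt0 _] _ ord_min] := ordqP q_pr p_coprime.
rewrite expn_sub1_prod_cyclotomic // logn_prod; last first.
  move=> d; rewrite -dvdn_divisors // => /(dvdn_gt0 m_gt0).
  exact: cyclotomic_at_gt0.
rewrite (big_rem (ordq q p)) ?divisors_id //= big1_seq ?addn0 //.
move=> d /andP[_]; rewrite mem_rem_uniq ?divisors_uniq // inE -dvdn_divisors //.
case/andP=> d_neq d_dvd; have d_gt0 := dvdn_gt0 m_gt0 d_dvd.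
apply: logn_coprime; rewrite prime_coprime //; apply/negP => q_dvd.
have d_lt : 0 < d < ordq q p by rewrite d_gt0 ltn_neqAle d_neq dvdn_leq.
case/negP: (ord_min d d_lt).
rewrite eqn_mod_dvd ?expn_gt0 ?p_gt0 //.
exact: dvdn_trans q_dvd (cyclotomic_at_dvdn p_gt0 d_gt0 (dvdnn d)).
Qed.

Lemma geom_sum_expand_mod_sq t q a :
  exists c, geom_sum (1 + t * q) a = a + t * q * 'C(a, 2) + q ^ 2 * c.
Proof.
have expansion i : exists c, (1 + t * q) ^ i = 1 + i * t * q + q ^ 2 * c.
  elim: i => [|i [c IHi]]; first by exists 0; rewrite expn0; ring.
  by exists (i * t * t + c * (1 + t * q)); rewrite expnS IHi; ring.
rewrite -bin2_sum; elim: a => [|a [C IHa]].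
  by exists 0; rewrite geom_sum0 big_geq //; ring.
have [c expansion_a] := expansion a.
by exists (C + c); rewrite geom_sumS IHa expansion_a big_nat_recr //=; ring.
Qed.

Section LiftingTheExponent.

Variable q : nat.
Hypotheses (q_pr : prime q) (q_gt2 : 2 < q).

Lemma logn_geom_sum_prime y : y = 1 %[mod q] -> logn q (geom_sum y q) = 1.
Proof.
have q_gt1 := prime_gt1 q_pr.
move=> y1; have [t ->] : exists t, y = 1 + t * q.
  by exists (y %/ q); rewrite {1}(divn_eq y q) y1 modn_small // addnC.
have [c ->] := geom_sum_expand_mod_sq t q q.
(* [q %| 'C(q, 2)] is where [q] odd is needed. *)
have /dvdnP[r ->] : q %| 'C(q, 2) by rewrite prime_dvd_bin // q_gt2.
have -> : q + t * q * (r * q) + q ^ 2 * c = q * (1 + (t * r + c) * q) by ring.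
rewrite (lognM _ (prime_gt0 q_pr)) // logn_prime // eqxx logn_coprime //.
by rewrite prime_coprime // /dvdn addnC modnMDl modn_small.
Qed.

(* Lifting the exponent: strip one factor [q] off [a] at a time via
   [geom_sum y (b q) = geom_sum y b * geom_sum (y ^ b) q]. *)
Lemma logn_geom_sum_mod1 y a : y = 1 %[mod q] -> 0 < a ->
  logn q (geom_sum y a) = logn q a.
Proof.
move=> y1; have q_gt0 := prime_gt0 q_pr.
elim/ltn_ind: a => a IHa a_gt0.
have [/dvdnP[b def_a]|q_ndvd_a] := boolP (q %| a); last first.
  by rewrite !logn_coprime // prime_coprime // /dvdn geom_sum_mod1.
have b_gt0 : 0 < b by move: a_gt0; rewrite def_a muln_gt0 => /andP[].
have yb1 : y ^ b = 1 %[mod q] by rewrite -modnXm y1 modnXm exp1n.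
rewrite def_a geom_sumM lognM ?geom_sum_gt0 // (IHa b) //; last first.
  by rewrite def_a -{1}(muln1 b) ltn_pmul2l // prime_gt1.
by rewrite logn_geom_sum_prime // lognM // (logn_prime q q_pr) eqxx.
Qed.

Lemma logn_expn_sub1_ordq p j :
  1 < p -> coprime p q -> ordq q p %| j -> 0 < j ->
  logn q (p ^ j - 1) = logn q j + vPhi q (ordq q p) p.
Proof.
move=> p_gt1 p_coprime /dvdnP[c ->]; rewrite muln_gt0 => /andP[c_gt0 m_gt0].
have [_ pm1 _] := ordqP q_pr p_coprime.
have pm1_gt0 : 0 < (p ^ ordq q p).-1.
  by rewrite -subn1 subn_gt0 -{1}(expn0 p) ltn_exp2l.
rewrite mulnC expnM expn_sub1E lognM ?geom_sum_gt0 // -subn1.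
rewrite logn_geom_sum_mod1 // vPhi_ordq // lognM //.
by rewrite (logn_coprime (coprime_ordq q_pr p_coprime)) add0n addnC.
Qed.

Lemma logn_geom_sum_nmod1 y a : 0 < y -> y != 1 %[mod q] -> 0 < a ->
  logn q (geom_sum y a) = logn q (y ^ a - 1).
Proof.
move=> y_gt0 y_n1 a_gt0.
have y_gt1 : 1 < y by case: y y_gt0 y_n1 => [|[|y]] //; rewrite eqxx.
have q_ndvd : ~~ (q %| y.-1) by rewrite -subn1 -eqn_mod_dvd.
have y1_gt0 : 0 < y.-1 by rewrite -subn1 subn_gt0.
rewrite expn_sub1E lognM ?geom_sum_gt0 // (@logn_coprime q y.-1) //.
by rewrite prime_coprime.
Qed.

Lemma logn_geom_sum_expn p k a : prime p -> 0 < k -> 0 < a ->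
  logn q (geom_sum (p ^ k) a) =
    (if p ^ k == 1 %[mod q] then logn q a else 0)
  + (if [&& p != q, p ^ k != 1 %[mod q] & ordq q (p ^ k) %| a]
     then logn q a + logn q k + vPhi q (ordq q p) p else 0).
Proof.
move=> p_pr k_gt0 a_gt0; have q_gt1 := prime_gt1 q_pr.
have [->|p_neq_q] := eqVneq p q.
  have qk0 : q ^ k = 0 %[mod q] by rewrite -(prednK k_gt0) expnS modnMr mod0n.
  rewrite /= qk0 mod0n modn_small //=; apply: logn_coprime.
  rewrite prime_coprime // /dvdn -(prednK a_gt0) -add1n geom_sumD expn1.
  rewrite -modnDm -modnMml qk0 mod0n mul0n mod0n addn0 modn_mod.
  by rewrite /geom_sum big_nat1 expn0 modn_small.
have p_coprime : coprime p q by rewrite prime_coprime // dvdn_prime2.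
have [y1|y_n1] /= := boolP (p ^ k == 1 %[mod q]).
  by rewrite addn0 logn_geom_sum_mod1 //; apply/eqP.
have y_gt0 : 0 < p ^ k by rewrite expn_gt0 prime_gt0.
rewrite add0n logn_geom_sum_nmod1 //.
have [ord_dvd|ord_ndvd] := boolP (ordq q (p ^ k) %| a); last first.
  have ya_gt0 : 0 < (p ^ k) ^ a by rewrite expn_gt0 y_gt0.
  apply: logn_coprime; rewrite prime_coprime // -eqn_mod_dvd //.
  by rewrite -ordq_dvdn // coprimeXl.
have ordp_dvd : ordq q p %| k * a by rewrite ordq_dvdn // expnM -ordq_dvdn ?coprimeXl.
rewrite -expnM logn_expn_sub1_ordq ?prime_gt1 ?muln_gt0 ?k_gt0 //.
by rewrite lognM // [logn q k + _]addnC.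
Qed.

End LiftingTheExponent.

Theorem theorem1 (n k q : nat) :
  (2 <= n)%N -> (1 <= k)%N -> prime q -> (3 <= q)%N ->
  logn q (sigma k n) =
    (\sum_(p <- primes n | p ^ k == 1 %[mod q]) logn q (logn p n).+1
   + \sum_(p <- primes n | [&& p != q, p ^ k != 1 %[mod q]
                             & ordq q (p ^ k) %| (logn p n).+1])
        (logn q (logn p n).+1 + logn q k + vPhi q (ordq q p) p))%N.
Proof.
move=> n_ge2 k_gt0 q_pr q_gt2.
rewrite sigmaE ?(leq_trans _ n_ge2) // logn_prod => [|p _]; last first.
  by rewrite geom_sum_gt0.
rewrite [X in _ = X + _]big_mkcond [X in _ = _ + X]big_mkcond -big_split /=.
apply: eq_big_seq => p.
by rewrite mem_primes => /and3P[p_pr _ _]; apply: logn_geom_sum_expn.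
Qed.
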